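(* Let $\hat Q^\pi\in\mathcal H$ be the kernel TD estimator, i.e. a function satisfying $$\hat Q^\pi\in\arg\min_{f\in\mathcal H}\ \frac1n\sum_{i=1}^n\Big(f(\omega_0^{(i)})-r(\omega_0^{(i)})-\gamma\hat Q^\pi(\omega_1^{(i)})\Big)^2+\lambda\|f\|_{\mathcal H}^2 .$$ Then $\hat Q^\pi$ has the closed form $$\hat Q^\pi=K(\cdot,\boldsymbol\omega_0)\,\mathbf b^\pi=\sum_{i=1}^n b^\pi_i K(\cdot,\omega_0^{(i)}),\qquad \mathbf b^\pi=\big[\mathbf K+\lambda n\mathrm I-\gamma\mathbf C\big]^{-1}\mathbf r,$$ where $\mathbf K_{i,j}=K(\omega_0^{(i)},\omega_0^{(j)})$, $\mathbf C_{i,j}=K(\omega_1^{(i)},\omega_0^{(j)})$ and $\mathbf r=[r(\omega_0^{(1)}),\dots,r(\omega_0^{(n)})]^\top$.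
   Context: Markov decision process $(\mathcal S,\mathcal A,P,r,\gamma)$ with compact convex $\mathcal S\subset\mathbb R^{d_s}$, $\mathcal A\subset\mathbb R^{d_a}$, transition density $P(\cdot\mid s,a)$, reward $r:\mathcal S\times\mathcal A\to\mathbb R$, discount $\gamma\in[0,1]$; $\pi$ is a fixed policy. Write $\omega=(s,a)$. $K$ is a symmetric positive definite kernel on $\mathcal S\times\mathcal A$ with $\max_\omega K(\omega,\omega)<\infty$, $\mathcal H$ its RKHS, and $\lambda>0$. Data: for $i=1,\dots,n$, independently $s_0^{(i)}\sim\mu_0$, $a_0^{(i)}\sim\pi(\cdot\mid s_0^{(i)})$, $s_1^{(i)}\sim P(\cdot\mid s_0^{(i)},a_0^{(i)})$, $a_1^{(i)}\sim\pi(\cdot\mid s_1^{(i)})$, where $\mu_0$ is a chosen initial state distribution; $\omega_j^{(i)}=(s_j^{(i)},a_j^{(i)})$ for $j=0,1$, and $\boldsymbol\omega_0=(\omega_0^{(1)},\dots,\omega_0^{(n)})$. *)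

From HB Require Import structures.
From mathcomp Require Import all_boot all_order all_algebra.
From mathcomp Require Import all_classical all_reals all_analysis.
Set Implicit Arguments. Unset Strict Implicit. Unset Printing Implicit Defensive.
Import Order.TTheory GRing.Theory Num.Theory.
Import numFieldNormedType.Exports.
Local Open Scope ring_scope.
Local Open Scope classical_set_scope.

Definition convex_rV (R : realType) (d : nat) (S : set 'rV[R]_d) : Prop :=
  forall x y (t : R), S x -> S y -> 0 <= t -> t <= 1 -> S (t *: x + (1 - t) *: y).

Definition SA (R : realType) (ds da : nat) (S : set 'rV[R]_ds) (A : set 'rV[R]_da) :=
  {w : 'rV[R]_ds * 'rV[R]_da | S w.1 /\ A w.2}.

Definition sym_pd_kernel (R : realType) (X : Type) (K : X -> X -> R) : Prop :=
  (forall x y, K x y = K y x) /\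
  (forall (m : nat) (x : 'I_m -> X) (c : 'I_m -> R),
      0 <= \sum_(i < m) \sum_(j < m) c i * c j * K (x i) (x j)).

(* (H, ip, feat) is the reproducing kernel Hilbert space of K on X:
   H is a real inner-product space, complete for the induced norm; each
   element f of H is identified with the function x |-> ip f (feat x)
   (this identification is injective), and feat x = K(., x), i.e.
   K x y = ip (feat x) (feat y) (reproducing property). *)
Definition rkhs_norm (R : realType) (H : lmodType R) (ip : H -> H -> R) (f : H) : R :=
  Num.sqrt (ip f f).

Definition is_RKHS (R : realType) (X : Type) (K : X -> X -> R)
    (H : lmodType R) (ip : H -> H -> R) (feat : X -> H) : Prop :=
  (forall f g, ip f g = ip g f) /\
      (forall (a : R) f g h, ip (a *: f + g) h = a * ip f h + ip g h) /\
      (forall f, f != 0 -> 0 < ip f f) /\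
      (forall u : nat -> H,
         (forall e : R, 0 < e -> exists N : nat, forall m n : nat,
              (N <= m)%N -> (N <= n)%N -> rkhs_norm ip (u m - u n) < e) ->
         exists f : H, forall e : R, 0 < e -> exists N : nat, forall n : nat,
              (N <= n)%N -> rkhs_norm ip (u n - f) < e) /\
      (forall f, (forall x, ip f (feat x) = 0) -> f = 0) /\
      (forall x y, K x y = ip (feat x) (feat y)).

Definition rkhs_eval (R : realType) (X : Type) (H : lmodType R)
    (ip : H -> H -> R) (feat : X -> H) (f : H) (x : X) : R := ip f (feat x).

Definition td_objective (R : realType) (X : Type) (H : lmodType R)
    (ip : H -> H -> R) (feat : X -> H) (r : X -> R) (gamma lambda : R)
    (n : nat) (w0 w1 : 'I_n -> X) (Q f : H) : R :=
  n%:R^-1 * \sum_(i < n)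
     (rkhs_eval ip feat f (w0 i) - r (w0 i) - gamma * rkhs_eval ip feat Q (w1 i)) ^+ 2
  + lambda * (rkhs_norm ip f) ^+ 2.

From HB Require Import structures.
From mathcomp Require Import all_boot all_order all_algebra.
From mathcomp Require Import all_classical all_reals all_analysis.
From mathcomp Require Import ring lra.
Set Implicit Arguments. Unset Strict Implicit. Unset Printing Implicit Defensive.
Import Order.TTheory GRing.Theory Num.Theory.
Import numFieldNormedType.Exports.
Local Open Scope ring_scope.
Local Open Scope classical_set_scope.

(* Freezing the bootstrapped target y_i = r(w0_i) + gamma Qhat(w1_i), the TD
   objective is an ordinary regularized least-squares objective in f, and Qhat
   minimizes it.  Moving from Qhat along v = sum_i e_i K(., w0_i) + lambda n Qhat,
   with e_i the residuals, changes the objective by 2t <v, v>/n + O(t^2); so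
   minimality forces v = 0, i.e. Qhat = sum_i a_i K(., w0_i) with
   a_i = -e_i / (lambda n).  Evaluating this identity at w0_i and w1_i
   through the reproducing property gives (K + lambda n I - gamma C) a = r. *)

Section BilinearForm.
Variables (R : realType) (H : lmodType R) (ip : H -> H -> R).
Hypothesis ip_sym : forall f g, ip f g = ip g f.
Hypothesis ip_linear : forall a f g h, ip (a *: f + g) h = a * ip f h + ip g h.

Lemma ip0l h : ip 0 h = 0.
Proof. have := ip_linear 1 0 0 h; rewrite scaler0 addr0 mul1r; lra. Qed.

Lemma ipDl f g h : ip (f + g) h = ip f h + ip g h.
Proof. by have := ip_linear 1 f g h; rewrite scale1r mul1r. Qed.

Lemma ipZl a f h : ip (a *: f) h = a * ip f h.
Proof. by have := ip_linear a f 0 h; rewrite !addr0 ip0l addr0. Qed.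

Lemma ipDr f g h : ip h (f + g) = ip h f + ip h g.
Proof. by rewrite ip_sym ipDl ip_sym (ip_sym g). Qed.

Lemma ipZr a f h : ip h (a *: f) = a * ip h f.
Proof. by rewrite ip_sym ipZl ip_sym. Qed.

Lemma ip_suml (I : Type) (s : seq I) (P : pred I) (F : I -> H) h :
  ip (\sum_(i <- s | P i) F i) h = \sum_(i <- s | P i) ip (F i) h.
Proof. by elim/big_rec2: _ => [|i y1 y2 _ <-]; rewrite ?ip0l ?ipDl. Qed.

Lemma ip_sum_scalel n (a : 'I_n -> R) (phi : 'I_n -> H) h :
  ip (\sum_(i < n) a i *: phi i) h = \sum_(i < n) a i * ip (phi i) h.
Proof. by rewrite ip_suml; apply: eq_bigr => i _; rewrite ipZl. Qed.

End BilinearForm.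

Lemma quadratic_ge0_linear_coef_eq0 (R : realType) (L M : R) :
  0 <= M -> (forall t, 0 <= 2 * t * L + t ^+ 2 * M) -> L = 0.
Proof.
move=> M_ge0 quad_ge0.
(* at t = -L/(M+1) the quadratic equals -L^2 (M+2)/(M+1)^2 *)
pose t := - L / (M + 1).
have L_def : L = - (t * (M + 1)) by rewrite /t; field; apply/eqP; lra.
have := quad_ge0 t; clearbody t; rewrite L_def => ?.
have -> : t = 0 by nra.
by rewrite mul0r oppr0.
Qed.

Lemma sum_sqr_line (R : realType) n (e c : 'I_n -> R) (t : R) :
  \sum_(i < n) (e i + t * c i) ^+ 2 =
  \sum_(i < n) e i ^+ 2 + 2 * t * \sum_(i < n) e i * c i
  + t ^+ 2 * \sum_(i < n) c i ^+ 2.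
Proof. by rewrite !mulr_sumr -!big_split /=; apply: eq_bigr => i _; ring. Qed.

Section RegularizedLeastSquares.
Variables (R : realType) (H : lmodType R) (ip : H -> H -> R).
Hypothesis ip_sym : forall f g, ip f g = ip g f.
Hypothesis ip_linear : forall a f g h, ip (a *: f + g) h = a * ip f h + ip g h.
Hypothesis ip_pos : forall f, f != 0 -> 0 < ip f f.
Variables (n : nat) (phi : 'I_n -> H) (y : 'I_n -> R) (lambda : R).
Hypothesis n_gt0 : (0 < n)%N.
Hypothesis lambda_gt0 : 0 < lambda.

Definition rls_objective (f : H) : R :=
  n%:R^-1 * \sum_(i < n) (ip f (phi i) - y i) ^+ 2 + lambda * ip f f.

Let residual f i := ip f (phi i) - y i.

Lemma ip_ge0 f : 0 <= ip f f.
Proof.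
have [->|/ip_pos/ltW//] := eqVneq f 0.
by rewrite (ip0l ip_linear).
Qed.

Lemma rls_objective_line f v t :
  rls_objective (f + t *: v) = rls_objective f
    + 2 * t * (n%:R^-1 * \sum_(i < n) residual f i * ip v (phi i) + lambda * ip f v)
    + t ^+ 2 * (n%:R^-1 * \sum_(i < n) ip v (phi i) ^+ 2 + lambda * ip v v).
Proof.
rewrite /rls_objective.
under eq_bigr => i _ do
  rewrite (ipDl ip_linear) (ipZl ip_linear) -addrAC -/(residual f i).
rewrite sum_sqr_line (ipDl ip_linear) !(ipDr ip_sym ip_linear).
rewrite !(ipZl ip_linear) !(ipZr ip_sym ip_linear) (ip_sym v f).
ring.
Qed.

Lemma rls_minimizer_representer f :
  (forall g, rls_objective f <= rls_objective g) ->
  f = \sum_(i < n) ((y i - ip f (phi i)) / (lambda * n%:R)) *: phi i.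
Proof.
move=> f_min.
have n_gt0R : 0 < n%:R :> R by rewrite ltr0n.
have ln_neq0 : lambda * n%:R != 0 by rewrite mulf_neq0 // gt_eqF.
(* n/2 times the gradient of the objective at f *)
pose v := \sum_(i < n) residual f i *: phi i + (lambda * n%:R) *: f.
have slope_vv : n%:R^-1 * \sum_(i < n) residual f i * ip v (phi i)
    + lambda * ip f v = n%:R^-1 * ip v v.
  rewrite {3}/v (ipDl ip_linear) (ip_sum_scalel ip_linear) (ipZl ip_linear).
  under [in RHS]eq_bigr => i _ do rewrite ip_sym.
  by field; rewrite gt_eqF.
have vv0 : n%:R^-1 * ip v v = 0.
  rewrite -slope_vv; apply: (@quadratic_ge0_linear_coef_eq0 _ _
    (n%:R^-1 * \sum_(i < n) ip v (phi i) ^+ 2 + lambda * ip v v)).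
    by rewrite addr_ge0 ?mulr_ge0 ?invr_ge0 ?sumr_ge0 ?ip_ge0 ?ltW // => i _;
      exact: sqr_ge0.
  by move=> t; have := f_min (f + t *: v); rewrite rls_objective_line; lra.
have v0 : v = 0.
  apply/eqP; apply: contraT => /ip_pos; move: vv0.
  by move/eqP; rewrite mulf_eq0 invr_eq0 gt_eqF //= => /eqP ->; rewrite ltxx.
have lnf : (lambda * n%:R) *: f = - \sum_(i < n) residual f i *: phi i.
  by apply/eqP; rewrite -addr_eq0 addrC -/v v0.
rewrite -{1}[f](scalerK ln_neq0) lnf scalerN -scaleNr scaler_sumr.
apply: eq_bigr => i _.
by rewrite scalerA /residual mulNr -mulrN opprB mulrC.
Qed.

End RegularizedLeastSquares.

Section KernelExpansion.
Variables (R : realType) (X : Type) (K : X -> X -> R).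
Variables (H : lmodType R) (ip : H -> H -> R) (feat : X -> H).
Hypothesis ip_sym : forall f g, ip f g = ip g f.
Hypothesis ip_linear : forall a f g h, ip (a *: f + g) h = a * ip f h + ip g h.
Hypothesis reproducing : forall x y, K x y = ip (feat x) (feat y).
Variables (n : nat) (w0 w1 : 'I_n -> X) (a : 'I_n -> R) (Q : H).
Hypothesis Q_expansion : Q = \sum_(j < n) a j *: feat (w0 j).

Lemma eval_kernel_expansion x : ip Q (feat x) = \sum_(j < n) K x (w0 j) * a j.
Proof.
rewrite Q_expansion (ip_sum_scalel ip_linear); apply: eq_bigr => j _.
by rewrite reproducing ip_sym mulrC.
Qed.

Lemma kernel_fixed_point_system (r : X -> R) (gamma c : R) :
  c != 0 ->
  (forall i, a i = (r (w0 i) + gamma * ip Q (feat (w1 i)) - ip Q (feat (w0 i))) / c) ->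
  (\matrix_(i < n, j < n) K (w0 i) (w0 j) + c%:M
     - gamma *: \matrix_(i < n, j < n) K (w1 i) (w0 j)) *m \col_(i < n) a i
  = \col_(i < n) r (w0 i).
Proof.
move=> c_neq0 a_fixed; apply/matrixP => i k; rewrite (ord1 k).
rewrite mulmxBl mulmxDl mul_scalar_mx -scalemxAl !mxE.
have eval_mx w : \sum_(j < n) (\matrix_(i, j) K (w i) (w0 j)) i j * (\col_j a j) j ord0
    = ip Q (feat (w i)).
  by rewrite eval_kernel_expansion; apply: eq_bigr => j _; rewrite !mxE.
by rewrite !eval_mx a_fixed; field.
Qed.

End KernelExpansion.

Theorem proposition1 (R : realType) (ds da : nat)
    (S : set 'rV[R]_ds) (A : set 'rV[R]_da)
    (hS : compact S) (hSc : convex_rV S) (hA : compact A) (hAc : convex_rV A)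
    (r : SA S A -> R) (gamma lambda : R)
    (hg0 : 0 <= gamma) (hg1 : gamma <= 1) (hl : 0 < lambda)
    (K : SA S A -> SA S A -> R) (hK : sym_pd_kernel K)
    (hKb : exists M : R, forall w, K w w <= M)
    (H : lmodType R) (ip : H -> H -> R) (feat : SA S A -> H)
    (hH : is_RKHS K ip feat)
    (n : nat) (hn : (0 < n)%N) (w0 w1 : 'I_n -> SA S A) (Qhat : H)
    (hQ : forall f : H,
        td_objective ip feat r gamma lambda w0 w1 Qhat Qhat
        <= td_objective ip feat r gamma lambda w0 w1 Qhat f)
    (hinv : (\matrix_(i < n, j < n) K (w0 i) (w0 j)
             + (lambda * n%:R)%:M
             - gamma *: \matrix_(i < n, j < n) K (w1 i) (w0 j)) \in unitmx) :
  let Kmat := \matrix_(i < n, j < n) K (w0 i) (w0 j) in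
  let Cmat := \matrix_(i < n, j < n) K (w1 i) (w0 j) in
  let rvec := \col_(i < n) r (w0 i) in
  let b := invmx (Kmat + (lambda * n%:R)%:M - gamma *: Cmat) *m rvec in
  Qhat = \sum_(i < n) b i ord0 *: feat (w0 i).
Proof.
move=> Kmat Cmat rvec b.
case: hH => ip_sym [ip_linear [ip_pos [_ [_ reproducing]]]].
pose y i := r (w0 i) + gamma * ip Qhat (feat (w1 i)).
pose a i := (y i - ip Qhat (feat (w0 i))) / (lambda * n%:R).
have td_rls f : td_objective ip feat r gamma lambda w0 w1 Qhat f
    = rls_objective ip (fun i => feat (w0 i)) y lambda f.
  rewrite /td_objective /rls_objective /rkhs_eval /rkhs_norm.
  rewrite sqr_sqrtr ?(ip_ge0 ip_linear ip_pos) //.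
  by congr (_ * _ + _); apply: eq_bigr => i _; rewrite opprD addrA.
have Qhat_expansion : Qhat = \sum_(i < n) a i *: feat (w0 i).
  by apply: (rls_minimizer_representer ip_sym ip_linear ip_pos hn hl) => g;
    rewrite -!td_rls.
have ln_neq0 : lambda * n%:R != 0 by rewrite mulf_neq0 ?gt_eqF ?ltr0n.
have system := kernel_fixed_point_system ip_sym ip_linear reproducing
  Qhat_expansion (r := r) (gamma := gamma) ln_neq0 (fun i => erefl (a i)).
have -> : b = \col_(i < n) a i by rewrite /b /rvec -system mulKmx.
by rewrite {1}Qhat_expansion; apply: eq_bigr => i _; rewrite mxE.
Qed.
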